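(* Let $\mathcal{L}$ be a set of graphs. For all graphs $G_1,G_2$: $G_1\cong^{\mathbf{G}}_{\mathcal{L}}G_2$ iff $G_1$ and $G_2$ have the same sort and, for all graphs $G$, all finite permutations $\alpha$ of $\mathbb{S}$ and all finite $\tau\subseteq\mathbb{S}$, $\mathsf{rename}_\alpha(\mathsf{restrict}_\tau(G_1\parallel G))\in\mathcal{L}\iff\mathsf{rename}_\alpha(\mathsf{restrict}_\tau(G_2\parallel G))\in\mathcal{L}$.
   Context: Graphs over a countably infinite set $\mathbb{S}$ of source labels and a set $\mathbb{A}$ of edge labels: isomorphism classes of finite $\mathbb{A}$-labelled hypergraphs with an injective map $\xi$ from a finite sort $\tau\subseteq\mathbb{S}$ into the vertices. The HR algebra $\mathbf{G}$: sorts are finite subsets of $\mathbb{S}$; operations $\mathbf{0}_\tau$ (one $s$-source per $s\in\tau$), $\mathbf{a}_{(s_1,\ldots,s_{\#a})}$ (single $a$-edge on these sources), $\mathsf{restrict}_\tau$ (on sort $\tau'$, removes source labels in $\tau'\setminus\tau$, keeping vertices; result sort $\tau\cap\tau'$), $\mathsf{rename}_\alpha$ ($\alpha$ finite permutation; source map becomes $\xi\circ\alpha$, sort $\alpha^{-1}(\tau)$), $\parallel$ (disjoint union fusing the two $s$-sources for each common label $s$). The syntactic congruence $\cong^{\mathbf{A}}_{\mathcal{L}}$ of a set $\mathcal{L}$ in an algebra $\mathbf{A}$ relates $a,b$ iff they have the same sort and for every first-order term $t(x,y_1,\ldots,y_k)$ over the signature of $\mathbf{A}$ and all elements $c_1,\ldots,c_k$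 of matching sorts, $t^{\mathbf{A}}(a,\bar c)\in\mathcal{L}\iff t^{\mathbf{A}}(b,\bar c)\in\mathcal{L}$. *)

From mathcomp Require Import all_boot.
Set Implicit Arguments. Unset Strict Implicit. Unset Printing Implicit Defensive.

(* Source labels S := nat (countably infinite).  A concrete graph:
   vertices 0 .. gv-1, a list of labelled hyperedges (label, attachment list),
   and the source map xi as a list of pairs (source label, vertex). *)
Record graph (A : Type) := Graph {
  gv : nat;
  ge : seq (A * seq nat);
  gs : seq (nat * nat) }.

Record finperm := FinPerm {
  fp : nat -> nat;
  fp_inv : nat -> nat;
  fp_K : cancel fp fp_inv;
  fp_Kinv : cancel fp_inv fp;
  fp_fin : exists n, forall s, n <= s -> fp s = s }.

Section HR.
Variables (A : eqType) (ar : A -> nat).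

Definition wf (G : graph A) : Prop :=
  [/\ all (fun e => size e.2 == ar e.1) (ge G),
      all (fun e => all (fun v => v < gv G) e.2) (ge G),
      all (fun p => p.2 < gv G) (gs G),
      uniq (unzip1 (gs G)) & uniq (unzip2 (gs G))].

(* the sort of G, as a finite set of labels (compared extensionally) *)
Definition labels (G : graph A) : seq nat := unzip1 (gs G).
Definition same_sort (G H : graph A) : Prop := labels G =i labels H.

Definition iso (G H : graph A) : Prop :=
  exists f : nat -> nat,
  [/\ gv G = gv H,
      forall v, v < gv G -> f v < gv H,
      forall u v, u < gv G -> v < gv G -> f u = f v -> u = v,
      perm_eq [seq (e.1, map f e.2) | e <- ge G] (ge H)
    & perm_eq [seq (p.1, f p.2) | p <- gs G] (gs H)].

(* a "set of graphs" = a set of isomorphism classes *)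
Definition iso_invariant (L : graph A -> Prop) : Prop :=
  forall G H, wf G -> wf H -> iso G H -> L G -> L H.

Definition zero_g (tau : seq nat) : graph A :=
  let u := undup tau in Graph (size u) [::] (zip u (iota 0 (size u))).

Definition edge_g (a : A) (ss : seq nat) : graph A :=
  let u := undup ss in
  Graph (size u) [:: (a, [seq index s u | s <- ss])] (zip u (iota 0 (size u))).

Definition restrict_g (tau : seq nat) (G : graph A) : graph A :=
  Graph (gv G) (ge G) [seq p <- gs G | p.1 \in tau].

(* new source map is xi o alpha: label s' is mapped to xi (alpha s') *)
Definition rename_g (al : finperm) (G : graph A) : graph A :=
  Graph (gv G) (ge G) [seq (fp_inv al p.1, p.2) | p <- gs G].

Definition src_lookup (G : graph A) (s : nat) : option nat :=
  if s \in unzip1 (gs G) then Some (nth 0 (unzip2 (gs G)) (index s (unzip1 (gs G))))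
  else None.

Definition label_of (G : graph A) (v : nat) : option nat :=
  if v \in unzip2 (gs G) then Some (nth 0 (unzip1 (gs G)) (index v (unzip2 (gs G))))
  else None.

(* Vertices of G keep their numbers; a vertex of H that is an s-source with
   s a label of G goes to the s-source of G; the other vertices of H are
   renumbered after those of G. *)
Definition par_g (G H : graph A) : graph A :=
  let fused v := match label_of H v with
                 | Some s => src_lookup G s | None => None end in
  let fresh v := fused v == None in
  let h v := match fused v with
             | Some w => w
             | None => gv G + count fresh (iota 0 v) end in
  Graph (gv G + count fresh (iota 0 (gv H)))
        (ge G ++ [seq (e.1, map h e.2) | e <- ge H])
        (gs G ++ [seq (p.1, h p.2) | p <- gs H & p.1 \notin labels G]).

Inductive term :=
| TVar of nat
| TZero of seq nat
| TEdge (a : A) of (ar a).-tuple nat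
| TRestrict of seq nat & term
| TRename of finperm & term
| TPar of term & term.

Fixpoint eval (env : nat -> graph A) (t : term) : graph A :=
  match t with
  | TVar i => env i
  | TZero tau => zero_g tau
  | TEdge a ss => edge_g a ss
  | TRestrict tau t1 => restrict_g tau (eval env t1)
  | TRename al t1 => rename_g al (eval env t1)
  | TPar t1 t2 => par_g (eval env t1) (eval env t2)
  end.

(* environment: variable 0 is x, variables i >= 1 are the y_i *)
Definition env_of (x : graph A) (c : nat -> graph A) (i : nat) : graph A :=
  if i == 0 then x else c i.

Definition syn_cong (L : graph A -> Prop) (G1 G2 : graph A) : Prop :=
  same_sort G1 G2 /\
  forall (t : term) (c : nat -> graph A), (forall i, wf (c i)) ->
    (L (eval (env_of G1 c) t) <-> L (eval (env_of G2 c) t)).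

End HR.

From mathcomp Require Import all_boot zify.
Set Implicit Arguments. Unset Strict Implicit. Unset Printing Implicit Defensive.

(* One direction instantiates the term rename_al (restrict_tau (x || y)).
   Conversely, call G1 and G2 context-equivalent when they satisfy the right-hand
   side.  The context rename_id (restrict_sort (_ || 0)) is the identity, so
   context-equivalent graphs are both in L or both outside it, and it suffices to
   show that context equivalence is a congruence of the HR algebra.  Renaming
   commutes with || up to renaming the other argument; a restriction is traded for
   a renaming that moves the forgotten labels out of the way of the other argument,
   followed by a restriction; composition on the right is absorbed by associativity
   of ||, and composition on the left by associativity and by commutativity of ||
   up to an isomorphism, which L cannot see. *)

Lemma eq_option_Some (T : eqType) (o1 o2 : option T) :
  (forall v, (o1 == Some v) = (o2 == Some v)) -> o1 = o2.
Proof.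
case: o1 => [a|]; case: o2 => [b|] // h.
- by move: (h a); rewrite eqxx => /esym/eqP[->].
- by move: (h a); rewrite eqxx.
- by move: (h b); rewrite eqxx.
Qed.

Lemma uniq_map_inj_in (T U : eqType) (f : T -> U) s :
  uniq (map f s) -> {in s &, injective f}.
Proof.
elim: s => //= a s IH /andP[na u] x y; rewrite !in_cons.
case/orP => [/eqP->|xs]; case/orP => [/eqP->|ys] e //.
- by move: na; rewrite e map_f.
- by move: na; rewrite -e map_f.
- exact: IH.
Qed.

Lemma eq_in_map_filter (T : eqType) (U : Type) (f1 f2 : T -> U) (a1 a2 : pred T) s :
  {in s, f1 =1 f2} -> {in s, a1 =1 a2} -> map f1 (filter a1 s) = map f2 (filter a2 s).
Proof.
move=> h1 h2; rewrite (eq_in_filter h2); apply/eq_in_map => x.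
by rewrite mem_filter => /andP[_ /h1].
Qed.

Lemma ltn_foldr_maxn (s : seq nat) x : x \in s -> x < (foldr maxn 0 s).+1.
Proof.
elim: s => //= y s IH; rewrite in_cons ltnS => /orP[/eqP->|/IH]; first exact: leq_maxl.
by rewrite ltnS => h; apply: leq_trans h (leq_maxr _ _).
Qed.

Lemma count_iota_ltn (P : pred nat) x y : P x -> x < y ->
  count P (iota 0 x) < count P (iota 0 y).
Proof.
move=> Px xy; rewrite -(subnKC (ltnW xy)) iotaD count_cat /= add0n.
by rewrite -(subnSK xy) /= Px /= addnS ltnS leq_addr.
Qed.

Lemma count_iota_inj (P : pred nat) x y : P x -> P y ->
  count P (iota 0 x) = count P (iota 0 y) -> x = y.
Proof.
move=> Px Py e; case: (ltngtP x y) => // h.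
  by move: (count_iota_ltn Px h); rewrite e ltnn.
by move: (count_iota_ltn Py h); rewrite e ltnn.
Qed.

Lemma count_mem_iota (T : seq nat) n : uniq T -> all (fun x => x < n) T ->
  count (mem T) (iota 0 n) = size T.
Proof.
move=> uT aT; rewrite -size_filter; apply: perm_size.
apply: uniq_perm => //; first by rewrite filter_uniq // iota_uniq.
move=> x; rewrite mem_filter mem_iota add0n /=; case xT: (x \in T) => //=.
exact: (allP aT x xT).
Qed.

Lemma count_mem_sym (s1 s2 : seq nat) : uniq s1 -> uniq s2 ->
  count (mem s1) s2 = count (mem s2) s1.
Proof.
move=> u1 u2; rewrite -!size_filter; apply: perm_size.
apply: uniq_perm; rewrite ?filter_uniq // => x.
by rewrite !mem_filter andbC.
Qed.

Lemma index_filter_iota (P : pred nat) n v : v < n -> P v ->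
  index v (filter P (iota 0 n)) = count P (iota 0 v).
Proof.
move=> vn Pv; rewrite -(subnKC (ltnW vn)) iotaD filter_cat index_cat.
rewrite mem_filter mem_iota ltnn andbF /= add0n size_filter.
by rewrite -(subnSK vn) /= Pv /= eqxx addn0.
Qed.

Definition finperm_id : finperm :=
  @FinPerm id id (fun _ => erefl) (fun _ => erefl) (ex_intro _ 0 (fun _ _ => erefl)).

Lemma finperm_comp_fin (a g : finperm) :
  exists n, forall s, n <= s -> fp g (fp a s) = s.
Proof.
case: (fp_fin a) => n1 h1; case: (fp_fin g) => n2 h2.
exists (maxn n1 n2) => s; rewrite geq_max => /andP[l1 l2].
by rewrite h1 // h2.
Qed.

Definition finperm_comp (a g : finperm) : finperm :=
  @FinPerm (fp g \o fp a) (fp_inv a \o fp_inv g)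
    (can_comp (fp_K g) (fp_K a)) (can_comp (fp_Kinv a) (fp_Kinv g))
    (finperm_comp_fin a g).

Lemma finperm_inv_fin (g : finperm) : exists n, forall s, n <= s -> fp_inv g s = s.
Proof. by case: (fp_fin g) => n h; exists n => s ns; rewrite -{1}(h s ns) fp_K. Qed.

Definition finperm_inv (g : finperm) : finperm :=
  @FinPerm (fp_inv g) (fp g) (fp_Kinv g) (fp_K g) (finperm_inv_fin g).

(* For [D] a subset of [[0, N)], exchanges each [s] in [D] with [s + N]. *)
Definition swap_shift N (D : seq nat) s :=
  if s < N then (if s \in D then s + N else s)
  else if s < N + N then (if s - N \in D then s - N else s) else s.

Lemma swap_shiftK N D : involutive (swap_shift N D).
Proof.
move=> s; rewrite /swap_shift; case: (ltnP s N) => sN.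
  case: (boolP (s \in D)) => sD; last by rewrite sN (negbTE sD).
  have -> : (s + N < N) = false by apply/negbTE; rewrite -leqNgt leq_addl.
  by rewrite ltn_add2r sN addnK sD.
have sN' := leq_gtF sN.
case: (ltnP s (N + N)) => s2N; last by rewrite sN' (leq_gtF s2N).
case: (boolP (s - N \in D)) => sD; last by rewrite sN' s2N (negbTE sD).
have -> : s - N < N by rewrite ltn_subLR.
by rewrite sD subnK.
Qed.

Lemma swap_shift_fin N D : exists n, forall s, n <= s -> swap_shift N D s = s.
Proof.
exists (N + N) => s h; rewrite /swap_shift ltnNge (leq_trans (leq_addr N N) h) /=.
by rewrite ltnNge h.
Qed.

Definition finperm_swap N D : finperm :=
  @FinPerm (swap_shift N D) (swap_shift N D) (swap_shiftK N D) (swap_shiftK N D)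
    (swap_shift_fin N D).

Lemma swap_shift_small N D s : s < N -> swap_shift N D s = if s \in D then s + N else s.
Proof. by rewrite /swap_shift => ->. Qed.

Lemma mem_swap_shift_small N D (S : seq nat) s : (forall x, x \in S -> x < N) ->
  s < N -> (swap_shift N D s \in S) = (s \in S) && (s \notin D).
Proof.
move=> hS sN; rewrite swap_shift_small //; case: ifP => sD; last by rewrite andbT.
by rewrite andbF; apply/negP => /hS; rewrite ltnNge leq_addl.
Qed.

Section HR.
Variables (A : eqType) (ar : A -> nat).
Implicit Types (G H X Y Z W : graph A).

Lemma wf_uniq_labels G : wf ar G -> uniq (labels G).
Proof. by case. Qed.

Lemma wf_uniq_sources G : wf ar G -> uniq (unzip2 (gs G)).
Proof. by case. Qed.

Lemma wf_src_lt G p : wf ar G -> p \in gs G -> p.2 < gv G.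
Proof. by case=> _ _ /allP h _ _ /h. Qed.

Lemma src_lookup_Some G s v : uniq (labels G) ->
  (src_lookup G s == Some v) = ((s, v) \in gs G).
Proof.
rewrite /src_lookup /labels; elim: (gs G) => [|[a b] l IH] //=.
rewrite in_cons /= => /andP[na ul].
case: (eqVneq s a) => [->|nsa] /=.
  rewrite in_cons; apply/idP/idP => [/eqP[->]|]; first by rewrite eqxx.
  case/orP => [/eqP[->]//|/(map_f fst)/= ]; by rewrite (negbTE na).
by rewrite in_cons -pair_eqE /= (negbTE nsa) /= IH.
Qed.

Lemma src_lookup_None G s : (src_lookup G s == None) = (s \notin labels G).
Proof. by rewrite /src_lookup /labels; case: ifP. Qed.

Lemma label_of_Some G s v : uniq (unzip2 (gs G)) ->
  (label_of G v == Some s) = ((s, v) \in gs G).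
Proof.
rewrite /label_of; elim: (gs G) => [|[a b] l IH] //=.
rewrite in_cons /= => /andP[na ul].
case: (eqVneq v b) => [->|nvb] /=.
  rewrite in_cons; apply/idP/idP => [/eqP[->]|]; first by rewrite eqxx.
  case/orP => [/eqP[->]//|/(map_f snd)/= ]; by rewrite (negbTE na).
by rewrite in_cons -pair_eqE /= (negbTE nvb) andbF /= IH.
Qed.

Lemma label_of_None G v : (label_of G v == None) = (v \notin unzip2 (gs G)).
Proof. by rewrite /label_of; case: ifP. Qed.

Lemma label_of_labels G v s : label_of G v = Some s -> s \in labels G.
Proof.
rewrite /label_of /labels; case: ifP => // vin [<-].
by apply: mem_nth; rewrite size_map -(size_map snd) index_mem.
Qed.

Lemma mem_labels_restrict sg G x :
  (x \in labels (restrict_g sg G)) = (x \in labels G) && (x \in sg).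
Proof. by rewrite /labels /= /unzip1 -filter_map mem_filter andbC. Qed.

Lemma labels_rename al G : labels (rename_g al G) = map (fp_inv al) (labels G).
Proof. by rewrite /labels /unzip1 /= -!map_comp. Qed.

Lemma unzip2_rename al G : unzip2 (gs (rename_g al G)) = unzip2 (gs G).
Proof. by rewrite /unzip2 /= -map_comp. Qed.

Lemma label_of_rename al G v :
  label_of (rename_g al G) v = omap (fp_inv al) (label_of G v).
Proof.
rewrite /label_of unzip2_rename; case: ifP => // vin /=.
rewrite (labels_rename al G : unzip1 _ = _) (nth_map 0) //.
by rewrite size_map -(size_map snd) index_mem.
Qed.

Lemma src_lookup_rename al G s :
  src_lookup (rename_g al G) s = src_lookup G (fp al s).
Proof.
rewrite /src_lookup (labels_rename al G : unzip1 _ = _) unzip2_rename -/(labels G).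
have -> : s = fp_inv al (fp al s) by rewrite fp_K.
have inj_inv : injective (fp_inv al) := can_inj (fp_Kinv al).
by rewrite mem_map // index_map // fp_Kinv.
Qed.

Lemma src_lookup_restrict tau G s : uniq (labels G) ->
  src_lookup (restrict_g tau G) s = if s \in tau then src_lookup G s else None.
Proof.
move=> u; have u' : uniq (labels (restrict_g tau G)).
  by rewrite /labels /= /unzip1 -filter_map filter_uniq.
apply: eq_option_Some => v; rewrite src_lookup_Some //= mem_filter /=.
by case: ifP => _ //=; rewrite src_lookup_Some.
Qed.

Definition par_fused G H v := match label_of H v with
  | Some s => src_lookup G s | None => None end.
Definition par_fresh G H v := par_fused G H v == None.
Definition par_map G H v := match par_fused G H v with
  | Some w => w | None => gv G + count (par_fresh G H) (iota 0 v) end.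

Lemma par_gE G H : par_g G H =
  Graph (gv G + count (par_fresh G H) (iota 0 (gv H)))
        (ge G ++ [seq (e.1, map (par_map G H) e.2) | e <- ge H])
        (gs G ++ [seq (p.1, par_map G H p.2) | p <- gs H & p.1 \notin labels G]).
Proof. by []. Qed.

Lemma eq_par_map G H G' H' : gv G = gv G' -> par_fused G H =1 par_fused G' H' ->
  par_map G H =1 par_map G' H'.
Proof.
move=> eg ef v; rewrite /par_map ef eg; case: (par_fused G' H' v) => //.
by congr (_ + _); apply: eq_count => x; rewrite /par_fresh ef.
Qed.

Lemma par_map_fused X Z v w : par_fused X Z v = Some w -> par_map X Z v = w.
Proof. by rewrite /par_map => ->. Qed.

Lemma par_map_fresh X Z v : par_fresh X Z v ->
  par_map X Z v = gv X + count (par_fresh X Z) (iota 0 v).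
Proof. by rewrite /par_fresh /par_map => /eqP ->. Qed.

Lemma par_map_fresh_geq X Z v : par_fresh X Z v -> gv X <= par_map X Z v.
Proof. by move=> f; rewrite par_map_fresh // leq_addr. Qed.

Lemma par_map_fresh_inj X Z u v : par_fresh X Z u -> par_fresh X Z v ->
  par_map X Z u = par_map X Z v -> u = v.
Proof. by move=> fu fv; rewrite !par_map_fresh // => /addnI; apply: count_iota_inj. Qed.

Lemma par_fused_source X Z v w : uniq (labels X) -> par_fused X Z v = Some w ->
  exists2 s, label_of Z v = Some s & (s, w) \in gs X.
Proof.
move=> uX; rewrite /par_fused; case: (label_of Z v) => // s e.
by exists s => //; rewrite -src_lookup_Some // e.
Qed.

Lemma par_fresh_source X Z p : uniq (unzip2 (gs Z)) -> p \in gs Z ->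
  p.1 \notin labels X -> par_fresh X Z p.2.
Proof.
case: p => s v /= u2 sv sX; rewrite /par_fresh /par_fused.
have /eqP -> : label_of Z v == Some s by rewrite label_of_Some.
by rewrite src_lookup_None.
Qed.

Lemma rename_comp a g W : rename_g a (rename_g g W) = rename_g (finperm_comp a g) W.
Proof. by rewrite /rename_g /= -map_comp. Qed.

Lemma restrict_rename tau g W :
  restrict_g tau (rename_g g W) = rename_g g (restrict_g (map (fp g) tau) W).
Proof.
rewrite /rename_g /restrict_g /= filter_map; congr (Graph _ _ (map _ _)).
apply: eq_filter => p /=.
by rewrite -{2}(fp_Kinv g p.1) mem_map //; apply: can_inj (fp_K g).
Qed.

Lemma restrict_restrict tau sg W :
  restrict_g tau (restrict_g sg W) = restrict_g [seq s <- tau | s \in sg] W.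
Proof.
rewrite /restrict_g /= -filter_predI; congr (Graph _ _ _).
by apply: eq_filter => p /=; rewrite mem_filter andbC.
Qed.

Lemma par_rename_l g X G :
  par_g (rename_g g X) G = rename_g g (par_g X (rename_g (finperm_inv g) G)).
Proof.
have ef : par_fused (rename_g g X) G =1 par_fused X (rename_g (finperm_inv g) G).
  move=> v; rewrite /par_fused label_of_rename /=.
  by case: (label_of G v) => //= s; rewrite src_lookup_rename.
have eh := eq_par_map (G := rename_g g X) (G' := X) erefl ef.
rewrite !par_gE /rename_g /=; congr Graph.
- by congr (_ + _); apply: eq_count => v; rewrite /par_fresh ef.
- by congr (_ ++ _); apply: eq_map => e /=; rewrite (eq_map eh).
rewrite map_cat; congr (_ ++ _).
rewrite filter_map -!map_comp; apply: eq_in_map_filter => p _ /=.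
  by rewrite fp_K eh.
rewrite -/(rename_g g X) labels_rename -{1}(fp_K g p.1) mem_map //.
exact: can_inj (fp_Kinv g).
Qed.

Section RestrictPar.
Variables (sg : seq nat) (X G : graph A) (S : seq nat) (N : nat).
Hypotheses (uX : uniq (labels X)) (eX : labels X =i S).
Hypotheses (ltS : forall x, x \in S -> x < N) (ltG : forall x, x \in labels G -> x < N).
Let D := [seq x <- S | x \notin sg].
Let b := finperm_swap N D.

Lemma mem_labels_swap_shift s :
  s < N -> (swap_shift N D s \in labels X) = (s \in S) && (s \in sg).
Proof.
move=> sN; rewrite eX (mem_swap_shift_small _ ltS sN) mem_filter.
by case: (s \in S); rewrite ?andbT ?negbK.
Qed.

Lemma par_fused_restrict : par_fused (restrict_g sg X) G =1 par_fused X (rename_g b G).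
Proof.
move=> v; rewrite /par_fused label_of_rename.
case E: (label_of G v) => [s|] //=.
have sN : s < N := ltG (label_of_labels E).
rewrite src_lookup_restrict //; case: ifP => ssg.
  by rewrite swap_shift_small // mem_filter ssg.
by apply/esym/eqP; rewrite src_lookup_None mem_labels_swap_shift // ssg andbF.
Qed.

Let tau := [seq x <- S | x \in sg] ++ map (swap_shift N D) (labels G).

Lemma restrict_sources_l : [seq p <- gs X | p.1 \in sg] =
  [seq (swap_shift N D p.1, p.2) | p <- [seq p <- gs X | p.1 \in tau]].
Proof.
have memX p : p \in gs X -> p.1 \in S by move=> /(map_f fst); rewrite -eX.
have e1 : {in gs X, (fun p : nat * nat => p.1 \in tau) =1 (fun p => p.1 \in sg)}.
  move=> p /memX pS /=; rewrite mem_cat mem_filter pS andbT.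
  case: (boolP (p.1 \in sg)) => //= nsg.
  rewrite -{1}(swap_shiftK N D p.1) mem_map; last exact: inv_inj (swap_shiftK N D).
  by rewrite mem_swap_shift_small ?ltS // mem_filter nsg pS andbF.
rewrite (eq_in_filter e1) map_id_in // => p; rewrite mem_filter => /andP[ps pX].
by rewrite swap_shift_small ?(ltS (memX _ pX)) // mem_filter ps; case: p {ps pX}.
Qed.

(* The labels of [X] forgotten by [restrict_g sg] are moved above every label
   of [G], so that they no longer fuse with [G], and are forgotten afterwards. *)
Lemma par_restrict_l :
  par_g (restrict_g sg X) G = rename_g b (restrict_g tau (par_g X (rename_g b G))).
Proof.
have eh := eq_par_map (G := restrict_g sg X) (G' := X) erefl par_fused_restrict.
rewrite !par_gE /rename_g /restrict_g /=; congr Graph.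
- by congr (_ + _); apply: eq_count => v; rewrite /par_fresh par_fused_restrict.
- by congr (_ ++ _); apply: eq_map => e /=; rewrite (eq_map eh).
rewrite filter_cat map_cat; congr (_ ++ _); first exact: restrict_sources_l.
rewrite filter_map.
set l := [seq p <- [seq (swap_shift N D p.1, p.2) | p <- gs G] | p.1 \notin labels X].
rewrite [filter _ l](elimT all_filterP); last first.
  apply/allP => q; rewrite mem_filter => /andP[_ /mapP[r rG ->]] /=.
  by rewrite mem_cat map_f ?orbT // map_f.
rewrite /l filter_map -!map_comp; apply: eq_in_map_filter => p pG /=.
  by rewrite swap_shiftK eh.
rewrite -/(restrict_g sg X) mem_labels_restrict mem_labels_swap_shift -?eX //.
exact: ltG (map_f fst pG).
Qed.

End RestrictPar.

Lemma par_map_lt X Z v : wf ar X -> v < gv Z -> par_map X Z v < gv (par_g X Z).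
Proof.
move=> wX vZ; rewrite par_gE /=.
case E: (par_fused X Z v) => [w|].
  have [s _ sw] := par_fused_source (wf_uniq_labels wX) E.
  by rewrite (par_map_fused E); apply: leq_trans (leq_addr _ _); apply: wf_src_lt sw.
have fv : par_fresh X Z v by rewrite /par_fresh E.
by rewrite par_map_fresh // ltn_add2l; apply: count_iota_ltn.
Qed.

Lemma par_map_inj X Z u v : wf ar X -> wf ar Z ->
  par_map X Z u = par_map X Z v -> u = v.
Proof.
move=> wX wZ; have uX := wf_uniq_labels wX; have sX := wf_uniq_sources wX.
have uZ := wf_uniq_labels wZ; have sZ := wf_uniq_sources wZ.
case Eu: (par_fused X Z u) => [xu|]; case Ev: (par_fused X Z v) => [xv|].
- rewrite (par_map_fused Eu) (par_map_fused Ev) => exx; subst xv.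
  move: Eu Ev; rewrite /par_fused.
  case Lu: (label_of Z u) => [s|] //; case Lv: (label_of Z v) => [t|] //.
  move/eqP; rewrite src_lookup_Some // => sx; move/eqP; rewrite src_lookup_Some // => tx.
  have [est] := uniq_map_inj_in sX sx tx erefl; subst t.
  move/eqP: Lu; rewrite label_of_Some // => su; move/eqP: Lv; rewrite label_of_Some // => sv.
  by have [] := uniq_map_inj_in uZ su sv erefl.
- have [s _ sx] := par_fused_source uX Eu.
  rewrite (par_map_fused Eu) par_map_fresh ?/par_fresh ?Ev // => e.
  by move: (wf_src_lt wX sx); rewrite /= e ltnNge leq_addr.
- have [s _ sx] := par_fused_source uX Ev.
  rewrite (par_map_fused Ev) par_map_fresh ?/par_fresh ?Eu // => e.
  by move: (wf_src_lt wX sx); rewrite /= -e ltnNge leq_addr.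
- by apply: par_map_fresh_inj; rewrite /par_fresh ?Eu ?Ev.
Qed.

Lemma wf_par X Z : wf ar X -> wf ar Z -> wf ar (par_g X Z).
Proof.
move=> wX wZ; have [a1 a2 a3 a4 a5] := wX; have [b1 b2 b3 b4 b5] := wZ.
have hl v : v < gv Z -> par_map X Z v < gv X + count (par_fresh X Z) (iota 0 (gv Z)).
  by move=> vZ; have := par_map_lt wX vZ; rewrite par_gE.
split; rewrite par_gE /=.
- rewrite all_cat a1 /=; apply/allP => e /mapP[f fZ ->] /=.
  by rewrite size_map; apply: (allP b1).
- rewrite all_cat; apply/andP; split.
    apply/allP => e eX; apply/allP => v vX; apply: leq_trans (leq_addr _ _).
    exact: (allP (allP a2 e eX)).
  apply/allP => e /mapP[f fZ ->] /=; apply/allP => v /mapP[u uf ->].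
  by apply: hl; apply: (allP (allP b2 f fZ)).
- rewrite all_cat; apply/andP; split.
    by apply/allP => p pX; apply: leq_trans (leq_addr _ _); apply: (allP a3).
  apply/allP => q /mapP[p]; rewrite mem_filter => /andP[_ pZ] -> /=.
  by apply: hl; apply: (allP b3).
- rewrite /unzip1 map_cat cat_uniq a4 /=; apply/andP; split.
    by apply/hasPn => s /mapP[q /mapP[p]]; rewrite mem_filter => /andP[pX _] -> ->.
  rewrite -map_comp /=; apply: (subseq_uniq _ b4).
  by apply: map_subseq; apply: filter_subseq.
- rewrite /unzip2 map_cat cat_uniq a5 /=; apply/andP; split.
    apply/hasPn => s /mapP[q /mapP[p]]; rewrite mem_filter => /andP[pX pZ] -> -> /=.
    apply/negP => /mapP[r rX /esym e].
    have := par_map_fresh_geq (par_fresh_source b5 pZ pX).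
    by rewrite -e leqNgt (allP a3 r rX).
  rewrite -map_comp map_inj_in_uniq /=; first by rewrite filter_uniq // (map_uniq b4).
  move=> p q; rewrite !mem_filter => /andP[_ pZ] /andP[_ qZ] /= e.
  by apply: (uniq_map_inj_in b5 pZ qZ); apply: par_map_inj e.
Qed.

Lemma wf_rename al G : wf ar G -> wf ar (rename_g al G).
Proof.
case=> a1 a2 a3 a4 a5; split => //=.
- by apply/allP => q /mapP[p pG ->] /=; apply: (allP a3).
- rewrite (labels_rename al G : unzip1 _ = _) map_inj_uniq //.
  exact: can_inj (fp_Kinv al).
- by rewrite (unzip2_rename al G).
Qed.

Lemma wf_restrict tau G : wf ar G -> wf ar (restrict_g tau G).
Proof.
case=> a1 a2 a3 a4 a5; split => //=.
- by apply/allP => p; rewrite mem_filter => /andP[_ /(allP a3)].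
- by apply: (subseq_uniq _ a4); apply: map_subseq; apply: filter_subseq.
- by apply: (subseq_uniq _ a5); apply: map_subseq; apply: filter_subseq.
Qed.

Lemma wf_zero tau : wf ar (zero_g A tau).
Proof.
rewrite /zero_g; set u := undup tau.
have s1 : size u <= size (iota 0 (size u)) by rewrite size_iota.
split => //=.
- apply/allP => p /(map_f snd); rewrite /= -/(unzip2 _) unzip2_zip ?size_iota //.
  by rewrite mem_iota.
- by rewrite unzip1_zip // undup_uniq.
- by rewrite unzip2_zip ?size_iota // iota_uniq.
Qed.

Lemma wf_edge a (ss : (ar a).-tuple nat) : wf ar (edge_g a ss).
Proof.
rewrite /edge_g; set u := undup ss.
have s1 : size u <= size (iota 0 (size u)) by rewrite size_iota.
split => //=.
- by rewrite size_map size_tuple eqxx.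
- rewrite andbT; apply/allP => v /mapP[s sin ->].
  by rewrite index_mem mem_undup.
- apply/allP => p /(map_f snd); rewrite /= -/(unzip2 _) unzip2_zip ?size_iota //.
  by rewrite mem_iota.
- by rewrite unzip1_zip // undup_uniq.
- by rewrite unzip2_zip ?size_iota // iota_uniq.
Qed.

Lemma mem_labels_par X Z x :
  (x \in labels (par_g X Z)) = (x \in labels X) || (x \in labels Z).
Proof.
rewrite /labels par_gE /= /unzip1 map_cat mem_cat -map_comp.
rewrite -(filter_map fst (fun s => s \notin unzip1 (gs X))) mem_filter.
by case: (x \in labels X); rewrite ?andbT.
Qed.

Lemma src_lookup_par X Z s : wf ar X -> wf ar Z ->
  src_lookup (par_g X Z) s =
  if s \in labels X then src_lookup X s else omap (par_map X Z) (src_lookup Z s).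
Proof.
move=> wX wZ; have uX := wf_uniq_labels wX; have uZ := wf_uniq_labels wZ.
apply: eq_option_Some => w.
rewrite src_lookup_Some ?(wf_uniq_labels (wf_par wX wZ)) // par_gE /= mem_cat.
case: ifP => sX.
  rewrite src_lookup_Some // orbC; case: (boolP ((s, w) \in _)) => //= /mapP[p].
  by rewrite mem_filter => /andP[pX _] [e _]; move: pX; rewrite -e sX.
have -> : ((s, w) \in gs X) = false.
  by apply/negP => /(map_f fst) /=; rewrite -/(labels X) sX.
case E: (src_lookup Z s) => [z|] /=.
  have sz : (s, z) \in gs Z by rewrite -src_lookup_Some // E.
  apply/idP/idP => [|/eqP[<-]]; last by apply/mapP; exists (s, z); rewrite ?mem_filter ?sX.
  case/mapP => p; rewrite mem_filter => /andP[_ pZ] [e1 e2].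
  by rewrite e2 (uniq_map_inj_in uZ pZ sz) //= e1.
apply/negP => /mapP[p]; rewrite mem_filter => /andP[_ pZ] [e1 _].
by move: E => /eqP; rewrite src_lookup_None e1 map_f.
Qed.

Lemma label_of_par_l Z G m : wf ar Z -> wf ar G -> m < gv Z ->
  label_of (par_g Z G) m = label_of Z m.
Proof.
move=> wZ wG mZ; apply: eq_option_Some => s.
rewrite !label_of_Some ?(wf_uniq_sources wZ) ?(wf_uniq_sources (wf_par wZ wG)) //.
rewrite par_gE /= mem_cat; case: (boolP ((s, m) \in gs Z)) => //= _.
apply/negP => /mapP[p]; rewrite mem_filter => /andP[pX pZ] [_ e].
have := par_map_fresh_geq (par_fresh_source (wf_uniq_sources wG) pZ pX).
by rewrite -e leqNgt mZ.
Qed.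

Lemma label_of_par_map Z G g : wf ar Z -> wf ar G -> par_fresh Z G g ->
  label_of (par_g Z G) (par_map Z G g) = label_of G g.
Proof.
move=> wZ wG fg; have uG := wf_uniq_sources wG; apply: eq_option_Some => s.
rewrite !label_of_Some ?(wf_uniq_sources (wf_par wZ wG)) // par_gE /= mem_cat.
have -> : ((s, par_map Z G g) \in gs Z) = false.
  by apply/negP => /(wf_src_lt wZ) /=; rewrite ltnNge par_map_fresh_geq.
apply/idP/idP => [|sg].
  case/mapP => p; rewrite mem_filter => /andP[pX pZ] [-> e2].
  by rewrite (par_map_fresh_inj fg (par_fresh_source uG pZ pX) e2) -surjective_pairing.
apply/mapP; exists (s, g) => //; rewrite mem_filter sg andbT /=.
move: fg; rewrite /par_fresh /par_fused.
have /eqP -> : label_of G g == Some s by rewrite label_of_Some.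
by rewrite src_lookup_None.
Qed.

Section Assoc.
Variables X Z G : graph A.
Hypotheses (wX : wf ar X) (wZ : wf ar Z) (wG : wf ar G).
Let W := par_g X Z.
Let M := par_g Z G.

Lemma par_fused_par_r m : m < gv Z -> par_fused X M m = par_fused X Z m.
Proof. by move=> mZ; rewrite /par_fused label_of_par_l. Qed.

Lemma par_fused_par_l g : par_fused W G g = match label_of G g with
  | Some s => if s \in labels X then src_lookup X s
              else omap (par_map X Z) (src_lookup Z s)
  | None => None end.
Proof. by rewrite /par_fused; case: (label_of G g) => // s; rewrite src_lookup_par. Qed.

Lemma par_fresh_par_l g : par_fresh W G g -> par_fresh Z G g.
Proof.
rewrite /par_fresh par_fused_par_l /par_fused.
case: (label_of G g) => // s; case: (src_lookup Z s) => //= z.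
by case: ifP => // sX; rewrite src_lookup_None sX.
Qed.

Lemma par_fresh_assoc g :
  par_fresh Z G g -> par_fresh X M (par_map Z G g) = par_fresh W G g.
Proof.
move=> fg; rewrite /par_fresh {1}/par_fused label_of_par_map // par_fused_par_l.
move: fg; rewrite /par_fresh /par_fused.
case: (label_of G g) => // s /eqP E; rewrite E /=.
by case: ifP => // sX; rewrite src_lookup_None sX.
Qed.

Lemma count_par_fresh_assoc g :
  count (par_fresh X M) (iota 0 (gv Z + count (par_fresh Z G) (iota 0 g))) =
  count (par_fresh X Z) (iota 0 (gv Z)) + count (par_fresh W G) (iota 0 g).
Proof.
have iotaS (P : pred nat) n : count P (iota 0 (n + 1)) = count P (iota 0 n) + P n.
  by rewrite iotaD count_cat /= add0n addn0.
elim: g => [|g IH].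
  rewrite /= !addn0; apply: eq_in_count => m; rewrite mem_iota add0n => mZ.
  by rewrite /par_fresh par_fused_par_r.
rewrite -addn1 !iotaS; case: (boolP (par_fresh Z G g)) => fg.
  rewrite addnA iotaS IH -addnA; congr (_ + (_ + _)).
  by rewrite -par_map_fresh // par_fresh_assoc.
by rewrite (negbTE (contra (@par_fresh_par_l g) fg)) /= !addn0.
Qed.

Lemma par_map_assoc_l m : m < gv Z -> par_map X M m = par_map X Z m.
Proof.
move=> mZ; rewrite /par_map par_fused_par_r //; case: (par_fused X Z m) => //.
congr (_ + _); apply: eq_in_count => v; rewrite mem_iota add0n => vm.
by rewrite /par_fresh par_fused_par_r // (ltn_trans vm mZ).
Qed.

Lemma par_map_assoc_r g : par_map X M (par_map Z G g) = par_map W G g.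
Proof.
have uZ := wf_uniq_labels wZ.
case E: (par_fused Z G g) => [z|].
  have [s ls sz] := par_fused_source uZ E.
  rewrite (par_map_fused E) par_map_assoc_l; last exact: wf_src_lt wZ sz.
  have lz : label_of Z z = Some s by apply/eqP; rewrite label_of_Some ?(wf_uniq_sources wZ).
  rewrite {2}/par_map par_fused_par_l ls; case: ifP => sX.
    case E2: (src_lookup X s) => [x|]; last by move: E2 => /eqP; rewrite src_lookup_None sX.
    by rewrite (@par_map_fused _ _ z x) // /par_fused lz.
  by have /eqP -> : src_lookup Z s == Some z by rewrite src_lookup_Some.
have fg : par_fresh Z G g by rewrite /par_fresh E.
case: (boolP (par_fresh W G g)) => fW.
  rewrite par_map_fresh; last by rewrite par_fresh_assoc.
  by rewrite (par_map_fresh fg) count_par_fresh_assoc (par_map_fresh fW) /W par_gE addnA.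
move: fW; rewrite /par_fresh; case E3: (par_fused W G g) => [w|] // _.
rewrite (par_map_fused E3); apply: par_map_fused; rewrite /par_fused label_of_par_map //.
move: E3; rewrite par_fused_par_l; move: fg; rewrite /par_fresh /par_fused.
by case: (label_of G g) => // s /eqP ->; case: ifP.
Qed.

Lemma par_assoc : par_g (par_g X Z) G = par_g X (par_g Z G).
Proof.
have [_ b2 b3 _ _] := wZ.
rewrite -/W -/M [par_g W G]par_gE [par_g X M]par_gE; congr Graph.
- rewrite {1}/W par_gE /= -addnA; congr (_ + _).
  by rewrite /M par_gE /= count_par_fresh_assoc.
- rewrite /W par_gE /= -catA; congr (_ ++ _).
  rewrite /M par_gE /= map_cat; congr (_ ++ _).
    apply/eq_in_map => e eZ /=; congr (_, _); apply/eq_in_map => v vZ.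
    by rewrite par_map_assoc_l //; apply: (allP (allP b2 e eZ)).
  rewrite -map_comp; apply: eq_map => e /=; rewrite -map_comp.
  by congr (_, _); apply: eq_map => v /=; rewrite par_map_assoc_r.
rewrite /W par_gE /= -catA; congr (_ ++ _).
rewrite /M par_gE /= filter_cat map_cat; congr (_ ++ _).
  apply: eq_in_map_filter => p pZ //=.
  by rewrite par_map_assoc_l //; apply: (allP b3).
rewrite filter_map -filter_predI -map_comp.
apply: eq_in_map_filter => p pG /=; first by rewrite par_map_assoc_r.
by rewrite -/W mem_labels_par negb_or andbC.
Qed.

End Assoc.

Lemma perm_eq_sources G H f : uniq (labels G) -> uniq (labels H) ->
  (forall s, omap f (src_lookup G s) = src_lookup H s) ->
  perm_eq [seq (p.1, f p.2) | p <- gs G] (gs H).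
Proof.
move=> uG uH e; apply: uniq_perm; last 1 first.
- move=> [s w]; rewrite -src_lookup_Some // -e.
  apply/mapP/idP => [[[s' v] svG [-> ->]] | ].
    by have /eqP -> : src_lookup G s' == Some v by rewrite src_lookup_Some.
  case E: (src_lookup G s) => [v|] //= /eqP[<-].
  by exists (s, v); rewrite // -src_lookup_Some // E.
- by apply: (@map_uniq _ _ fst); rewrite /= -map_comp.
- exact: map_uniq uH.
Qed.

Lemma count_par_fused X Z : wf ar Z ->
  count (predC (par_fresh X Z)) (iota 0 (gv Z)) = count (mem (labels X)) (labels Z).
Proof.
move=> wZ; have b5 := wf_uniq_sources wZ.
set T := map snd [seq p <- gs Z | p.1 \in labels X].
have e : {in iota 0 (gv Z), predC (par_fresh X Z) =1 mem T}.
  move=> v _ /=; rewrite /par_fresh /par_fused.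
  case E: (label_of Z v) => [s|].
    move/eqP: E; rewrite label_of_Some // => sv.
    rewrite src_lookup_None negbK; apply/idP/idP => [sX|].
      by apply/mapP; exists (s, v) => //; rewrite mem_filter sX.
    case/mapP => p; rewrite mem_filter => /andP[pX pZ] ev.
    by rewrite (uniq_map_inj_in b5 pZ sv (esym ev)) in pX.
  move/eqP: E; rewrite label_of_None => vn /=; apply/esym/negP => /mapP[p].
  rewrite mem_filter => /andP[_ pZ] ev; move/negP: vn; apply.
  by rewrite ev map_f.
rewrite (eq_in_count e) count_mem_iota.
- by rewrite size_map size_filter /labels count_map.
- by apply: (subseq_uniq _ b5); apply: map_subseq; apply: filter_subseq.
- apply/allP => v /mapP[p]; rewrite mem_filter => /andP[_ pZ] ->.
  exact: wf_src_lt wZ pZ.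
Qed.

Lemma count_par_fresh X Z : wf ar Z ->
  count (par_fresh X Z) (iota 0 (gv Z)) = gv Z - count (mem (labels X)) (labels Z).
Proof.
move=> wZ; have := count_predC (par_fresh X Z) (iota 0 (gv Z)).
by rewrite size_iota count_par_fused // => e; rewrite -{2}e addnK.
Qed.

Lemma gv_par_comm X Z : wf ar X -> wf ar Z -> gv (par_g X Z) = gv (par_g Z X).
Proof.
move=> wX wZ; have uX := wf_uniq_labels wX; have uZ := wf_uniq_labels wZ.
rewrite !par_gE /= (count_par_fresh X wZ) (count_par_fresh Z wX) (count_mem_sym uX uZ).
have shared_leq (G H : graph A) : wf ar H -> count (mem (labels G)) (labels H) <= gv H.
  move=> wH; rewrite -(count_par_fused G wH).
  by apply: leq_trans (count_size _ _) _; rewrite size_iota.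
have := shared_leq X _ wZ; have := shared_leq Z _ wX.
by rewrite (count_mem_sym uX uZ); lia.
Qed.

Section CommIso.
Variables X Z : graph A.
Hypotheses (wX : wf ar X) (wZ : wf ar Z).
Let fresh_Z := filter (par_fresh X Z) (iota 0 (gv Z)).
(* The vertices of [par_g X Z] are those of [X], followed by the fresh vertices of
   [Z] in increasing order. *)
Let comm_map w := if w < gv X then par_map Z X w else nth 0 fresh_Z (w - gv X).

Lemma nth_fresh_Z r : r < size fresh_Z ->
  [/\ nth 0 fresh_Z r < gv Z, par_fresh X Z (nth 0 fresh_Z r)
    & par_map X Z (nth 0 fresh_Z r) = gv X + r].
Proof.
move=> rs; have := mem_nth 0 rs; rewrite mem_filter mem_iota add0n => /andP[fr lt].
split => //; rewrite par_map_fresh // -(index_filter_iota lt fr) index_uniq //.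
by rewrite filter_uniq // iota_uniq.
Qed.

Lemma comm_map_par_map v : v < gv Z -> comm_map (par_map X Z v) = v.
Proof.
move=> vZ; case E: (par_fused X Z v) => [x|].
  have [s ls sx] := par_fused_source (wf_uniq_labels wX) E.
  rewrite (par_map_fused E) /comm_map (wf_src_lt wX sx); apply: par_map_fused.
  have lx : label_of X x = Some s by apply/eqP; rewrite label_of_Some ?(wf_uniq_sources wX).
  rewrite /par_fused lx; apply/eqP; rewrite src_lookup_Some ?(wf_uniq_labels wZ) //.
  by rewrite -label_of_Some ?(wf_uniq_sources wZ) // ls.
have fv : par_fresh X Z v by rewrite /par_fresh E.
rewrite /comm_map par_map_fresh // ltnNge leq_addr /= addKn -(index_filter_iota vZ fv).
by rewrite nth_index // mem_filter fv mem_iota.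
Qed.

Lemma comm_map_lt w : w < gv (par_g X Z) -> comm_map w < gv (par_g Z X).
Proof.
move=> wn; rewrite /comm_map; case: (ltnP w (gv X)) => wX'; first exact: par_map_lt.
move: wn; rewrite par_gE /= -size_filter -ltn_subLR // => /nth_fresh_Z[zZ _ _].
exact: ltn_addr.
Qed.

Lemma par_map_neq_fresh u r : u < gv X -> r < size fresh_Z ->
  par_map Z X u != nth 0 fresh_Z r.
Proof.
move=> uX rs; have [zZ zf _] := nth_fresh_Z rs; apply/eqP.
case E: (par_fused Z X u) => [z|].
  rewrite (par_map_fused E) => ez; move: E; rewrite /par_fused.
  case Lu: (label_of X u) => [s|] //; move/eqP.
  rewrite src_lookup_Some ?(wf_uniq_labels wZ) // ez => sz.
  move: zf; rewrite /par_fresh /par_fused.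
  have -> : label_of Z (nth 0 fresh_Z r) = Some s.
    by apply/eqP; rewrite label_of_Some ?(wf_uniq_sources wZ).
  by rewrite src_lookup_None (label_of_labels Lu).
rewrite par_map_fresh ?/par_fresh ?E // => e; move: zZ; rewrite -e.
by rewrite ltnNge leq_addr.
Qed.

Lemma comm_map_inj u v : u < gv (par_g X Z) -> v < gv (par_g X Z) ->
  comm_map u = comm_map v -> u = v.
Proof.
rewrite par_gE /= -size_filter => un vn.
have idx w : gv X <= w -> w < gv X + size fresh_Z -> w - gv X < size fresh_Z.
  by move=> wX'; rewrite ltn_subLR.
rewrite /comm_map; case: (ltnP u (gv X)) => uX; case: (ltnP v (gv X)) => vX.
- exact: par_map_inj.
- by move/eqP; rewrite (negbTE (par_map_neq_fresh uX (idx v vX vn))).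
- by move/esym/eqP; rewrite (negbTE (par_map_neq_fresh vX (idx u uX un))).
- move/eqP; rewrite nth_uniq ?idx ?filter_uniq ?iota_uniq // => /eqP e.
  by rewrite -(subnK uX) -(subnK vX) e.
Qed.

Lemma comm_map_sources s :
  omap comm_map (src_lookup (par_g X Z) s) = src_lookup (par_g Z X) s.
Proof.
have uX := wf_uniq_labels wX; have uZ := wf_uniq_labels wZ.
have inX : (s \in labels X) = (src_lookup X s != None) by rewrite src_lookup_None negbK.
have inZ : (s \in labels Z) = (src_lookup Z s != None) by rewrite src_lookup_None negbK.
rewrite !src_lookup_par // inX inZ.
case EX: (src_lookup X s) => [x|]; case EZ: (src_lookup Z s) => [z|] //=.
- have sx : (s, x) \in gs X by rewrite -src_lookup_Some // EX.
  have lx : label_of X x = Some s by apply/eqP; rewrite label_of_Some ?(wf_uniq_sources wX).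
  by rewrite /comm_map (wf_src_lt wX sx) (@par_map_fused _ _ _ z) // /par_fused lx.
- have sx : (s, x) \in gs X by rewrite -src_lookup_Some // EX.
  by rewrite /comm_map (wf_src_lt wX sx).
- have sz : (s, z) \in gs Z by rewrite -src_lookup_Some // EZ.
  by rewrite comm_map_par_map // (wf_src_lt wZ sz).
Qed.

Lemma par_comm_iso : iso (par_g X Z) (par_g Z X).
Proof.
exists comm_map; split.
- exact: gv_par_comm.
- exact: comm_map_lt.
- exact: comm_map_inj.
- have [_ a2 _ _ _] := wX; have [_ b2 _ _ _] := wZ.
  have eZ : [seq (e.1, map comm_map e.2) | e <- [seq (e.1, map (par_map X Z) e.2) | e <- ge Z]]
            = ge Z.
    rewrite -map_comp; apply: map_id_in => e eZ /=.
    rewrite -map_comp map_id_in; first by case: e {eZ}.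
    by move=> v vZ /=; apply: comm_map_par_map; apply: (allP (allP b2 e eZ)).
  have eX : [seq (e.1, map comm_map e.2) | e <- ge X]
            = [seq (e.1, map (par_map Z X) e.2) | e <- ge X].
    apply/eq_in_map => e eX; congr (_, _); apply/eq_in_map => v vX.
    by rewrite /comm_map (allP (allP a2 e eX) v vX).
  by rewrite !par_gE /= map_cat eZ eX perm_catC.
- apply: perm_eq_sources; [exact/wf_uniq_labels/wf_par..| exact: comm_map_sources].
Qed.

End CommIso.

Lemma iso_restrict tau G H : iso G H -> iso (restrict_g tau G) (restrict_g tau H).
Proof.
case=> f [e1 e2 e3 e4 e5]; exists f; split => //=.
by have := perm_filter (fun p : nat * nat => p.1 \in tau) e5; rewrite filter_map.
Qed.

Lemma iso_rename al G H : iso G H -> iso (rename_g al G) (rename_g al H).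
Proof.
case=> f [e1 e2 e3 e4 e5]; exists f; split => //=.
by have := perm_map (fun p : nat * nat => (fp_inv al p.1, p.2)) e5; rewrite -!map_comp.
Qed.

Lemma rename_id_restrict_par_zero X (S : seq nat) : labels X =i S ->
  rename_g finperm_id (restrict_g S (par_g X (zero_g A [::]))) = X.
Proof.
move=> eX; rewrite /rename_g /restrict_g /= addn0 !cats0.
rewrite (eq_in_filter (a2 := predT)); last by move=> p pX; rewrite /= -eX map_f.
by rewrite filter_predT map_id_in; [case: X {eX} | case].
Qed.

Lemma wf_eval env (t : term ar) : (forall i, wf ar (env i)) -> wf ar (eval env t).
Proof.
move=> wenv; elim: t => [i|tau|a ss|tau t IH|al t IH|t1 IH1 t2 IH2] /=.
- exact: wenv.
- exact: wf_zero.
- exact: wf_edge.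
- exact: wf_restrict.
- exact: wf_rename.
- exact: wf_par.
Qed.

Section ContextEquivalence.
Variable L : graph A -> Prop.
Hypothesis HL : iso_invariant ar L.

Definition ctx_equiv X Y := same_sort X Y /\ forall G al tau, wf ar G ->
  (L (rename_g al (restrict_g tau (par_g X G))) <->
   L (rename_g al (restrict_g tau (par_g Y G)))).

Lemma ctx_equiv_refl X : ctx_equiv X X.
Proof. by []. Qed.

Lemma ctx_equiv_trans X Y Z : ctx_equiv X Y -> ctx_equiv Y Z -> ctx_equiv X Z.
Proof.
case=> s1 h1 [s2 h2]; split; first by move=> x; rewrite s1 s2.
by move=> G al tau wG; rewrite h1 // h2.
Qed.

Lemma ctx_equiv_L X Y : ctx_equiv X Y -> L X <-> L Y.
Proof.
case=> sXY h; have := h (zero_g A [::]) finperm_id (labels X) (wf_zero _).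
by rewrite !rename_id_restrict_par_zero.
Qed.

Lemma L_ctx_iso al tau P Q : wf ar P -> wf ar Q -> iso P Q ->
  L (rename_g al (restrict_g tau P)) -> L (rename_g al (restrict_g tau Q)).
Proof.
move=> wP wQ PQ; apply: HL.
- exact: wf_rename (wf_restrict _ wP).
- exact: wf_rename (wf_restrict _ wQ).
- exact: iso_rename (iso_restrict _ PQ).
Qed.

Lemma L_ctx_par_rotate al tau W Z G : wf ar W -> wf ar Z -> wf ar G ->
  L (rename_g al (restrict_g tau (par_g (par_g Z W) G))) <->
  L (rename_g al (restrict_g tau (par_g W (par_g G Z)))).
Proof.
move=> wW wZ wG; have wZW := wf_par wZ wW; have wGZ := wf_par wG wZ.
split=> h.
  apply: (L_ctx_iso (wf_par wGZ wW) (wf_par wW wGZ) (par_comm_iso wGZ wW)).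
  rewrite (par_assoc wG wZ wW).
  exact: (L_ctx_iso (wf_par wZW wG) (wf_par wG wZW) (par_comm_iso wZW wG) h).
apply: (L_ctx_iso (wf_par wG wZW) (wf_par wZW wG) (par_comm_iso wG wZW)).
rewrite -(par_assoc wG wZ wW).
exact: (L_ctx_iso (wf_par wW wGZ) (wf_par wGZ wW) (par_comm_iso wW wGZ) h).
Qed.

Lemma ctx_equiv_par_l X Y Z : wf ar X -> wf ar Y -> wf ar Z -> ctx_equiv X Y ->
  ctx_equiv (par_g X Z) (par_g Y Z).
Proof.
move=> wX wY wZ [sXY h]; split; first by move=> x; rewrite !mem_labels_par sXY.
move=> G al tau wG; rewrite (par_assoc wX wZ wG) (par_assoc wY wZ wG).
exact/h/wf_par.
Qed.

Lemma ctx_equiv_par_r X Y Z : wf ar X -> wf ar Y -> wf ar Z -> ctx_equiv X Y ->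
  ctx_equiv (par_g Z X) (par_g Z Y).
Proof.
move=> wX wY wZ [sXY h]; split; first by move=> x; rewrite !mem_labels_par sXY.
move=> G al tau wG.
rewrite (L_ctx_par_rotate _ _ wX wZ wG) (L_ctx_par_rotate _ _ wY wZ wG).
exact/h/wf_par.
Qed.

Lemma ctx_equiv_rename g X Y : ctx_equiv X Y -> ctx_equiv (rename_g g X) (rename_g g Y).
Proof.
case=> sXY h; split; first by move=> x; rewrite !labels_rename; apply/mapP/mapP;
  case=> y yin ->; exists y; rewrite ?sXY // -sXY.
move=> G al tau wG; rewrite !par_rename_l !restrict_rename !rename_comp.
exact/h/wf_rename.
Qed.

Lemma ctx_equiv_restrict sg X Y : wf ar X -> wf ar Y -> ctx_equiv X Y ->
  ctx_equiv (restrict_g sg X) (restrict_g sg Y).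
Proof.
move=> wX wY [sXY h]; split; first by move=> x; rewrite !mem_labels_restrict sXY.
move=> G al tau wG.
pose N := (foldr maxn 0 (labels X ++ labels G)).+1.
have ltX x : x \in labels X -> x < N by move=> xX; rewrite ltn_foldr_maxn // mem_cat xX.
have ltG x : x \in labels G -> x < N by move=> xG; rewrite ltn_foldr_maxn // mem_cat xG orbT.
have sYX : labels Y =i labels X by move=> x; rewrite sXY.
rewrite (par_restrict_l sg (wf_uniq_labels wX) (fun x => erefl) ltX ltG).
rewrite (par_restrict_l sg (wf_uniq_labels wY) sYX ltX ltG).
rewrite !restrict_rename !rename_comp !restrict_restrict; exact/h/wf_rename.
Qed.

Lemma ctx_equiv_eval e1 e2 (t : term ar) :
  (forall i, wf ar (e1 i)) -> (forall i, wf ar (e2 i)) ->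
  (forall i, ctx_equiv (e1 i) (e2 i)) -> ctx_equiv (eval e1 t) (eval e2 t).
Proof.
move=> w1 w2 h; elim: t => [i|tau|a ss|tau t IH|al t IH|t1 IH1 t2 IH2] /=.
- exact: h.
- exact: ctx_equiv_refl.
- exact: ctx_equiv_refl.
- by apply: ctx_equiv_restrict IH; apply: wf_eval.
- exact: ctx_equiv_rename.
- apply: (@ctx_equiv_trans _ (par_g (eval e2 t1) (eval e1 t2))).
    by apply: ctx_equiv_par_l IH1; apply: wf_eval.
  by apply: ctx_equiv_par_r IH2; apply: wf_eval.
Qed.

End ContextEquivalence.

End HR.

Unset Implicit Arguments.

Theorem lemma7p1 (A : eqType) (ar : A -> nat) (L : graph A -> Prop)
  (HL : iso_invariant ar L) (G1 G2 : graph A) (w1 : wf ar G1) (w2 : wf ar G2) :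
  syn_cong ar L G1 G2 <->
  (same_sort G1 G2 /\
   forall (G : graph A) (al : finperm) (tau : seq nat), wf ar G ->
     (L (rename_g al (restrict_g tau (par_g G1 G))) <->
      L (rename_g al (restrict_g tau (par_g G2 G))))).
Proof.
split=> [[sG12 h] | hG12].
  split=> // G al tau wG.
  exact: (h (TRename al (TRestrict tau (TPar (TVar ar 0) (TVar ar 1)))) (fun _ => G)).
split=> [|t c wc]; first by case: hG12.
have wenv G : wf ar G -> forall i, wf ar (env_of G c i).
  by move=> wG i; rewrite /env_of; case: eqP.
apply: ctx_equiv_L; apply: (ctx_equiv_eval HL t (wenv _ w1) (wenv _ w2)) => i.
by rewrite /env_of; case: eqP.
Qed.
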